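(* Let $\mathcal{S}$ be a nonempty semigroup such that $|\mathcal{S}\setminus E(\mathcal{S})|$ is finite, and let $T$ be an $\mathcal{S}$-valued sequence of length $|\mathcal{S}\setminus E(\mathcal{S})|$. Then $\prod(T)\cap E(\mathcal{S})=\emptyset$ if and only if $\mathcal{R}=\langle \mathrm{supp}(T)\rangle$ is a finite commutative semigroup with $\mathcal{S}\setminus\mathcal{R}\subseteq E(\mathcal{S})$, the universal semilattice $Y(\mathcal{R})$ is a chain, $x_1*x_2=x_1$ for all $x_1,x_2\in\mathcal{R}$ with $x_1\lneqq_{\mathcal{N}_{\mathcal{R}}} x_2$, and moreover: (i) each archimedean component of $\mathcal{R}$ is either a finite cyclic semigroup $\langle x\rangle$ with $x\in\mathrm{supp}(T)$ and $\mathcal{I}(x)\equiv 1\pmod{\mathcal{P}(x)}$, or an ideal extension of a nontrivial finite cyclic group $\langle x_2\rangle$ by a nontrivial finite cyclic nilsemigroup $\langle x_1\rangle$ with $x_1,x_2\in\mathrm{supp}(T)$ and with the partial homomorphism $\varphi^{\langle x_1\rangle}_{\langle x_2\rangle}$ trivial, i.e. $\varphi^{\langle x_1\rangle}_{\langle x_2\rangle}(x_1)=x_1*e_{\langle x_2\rangle}=e_{\langle x_2\rangle}$, where $e_{\langle x_2\rangle}$ is the identity element of the group $\langle x_2\rangle$; (ii) $\mathrm{v}_x(T)=\mathcal{I}(x)+\mathcal{P}(x)-2$ for each $x\in\mathrm{supp}(T)$.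
   Context: $(\mathcal{S},* )$ is a semigroup, $E(\mathcal{S})=\{e\in\mathcal{S}: e*e=e\}$. For a finite sequence $T$ of elements of $\mathcal{S}$: $\prod(T)$ is the set of all products of the terms of nonempty subsequences of $T$ taken in every possible order; $\mathrm{supp}(T)$ is the set of elements occurring in $T$; $\mathrm{v}_x(T)$ is the number of times $x$ occurs in $T$. $\langle X\rangle$ is the subsemigroup generated by $X$. For $x$ with $\langle x\rangle$ finite, the index $\mathcal{I}(x)$ is the least $r>0$ with $x^r=x^t$ for some positive $t\neq r$, and the period $\mathcal{P}(x)$ is the least $k>0$ with $x^{\mathcal{I}(x)+k}=x^{\mathcal{I}(x)}$. For a commutative semigroup $\mathcal{R}$: $a\leqq_{\mathcal{N}_{\mathcal{R}}} b$ means $a^m=b*c$ for some $c\in\mathcal{R}$ and integer $m>0$; $a\,\mathcal{N}_{\mathcal{R}}\,b$ means $a\leqq b$ and $b\leqq a$; $a\lneqq_{\mathcal{N}_{\mathcal{R}}} b$ means $a\leqq b$ but not $b\leqq a$. $\mathcal{N}_{\mathcal{R}}$ is a congruence, the quotient $Y(\mathcal{R})=\mathcal{R}/\mathcal{N}_{\mathcal{R}}$ is a semilattice (the universal semilattice), and its classes are the archimedean components of $\mathcal{R}$. A nilsemigroup is a semigroup with zero $0$ in which every element has some power equal to $0$. If $G$ is an ideal of a semigroup $B$ and $Q$ is the Rees quotient $B/G$ (collapsing $G$ to a zero), $B$ is called an ideal extension of $G$ by $Q$; when $B$ is a finite commutative archimedean semigroup that is an ideal extension of a group $G$ by a nilsemigroup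 $N$, the associated partial homomorphism $\varphi^N_G: N\setminus\{0_N\}=B\setminus G\to G$ is $a\mapsto a*e_G$, with $e_G$ the identity of $G$. *)

From mathcomp Require Import all_boot.
From Stdlib Require Import ClassicalEpsilon.
Set Implicit Arguments. Unset Strict Implicit. Unset Printing Implicit Defensive.

Section Semigroup.
Variables (S : eqType) (mul : S -> S -> S).

(* x^n for n >= 1 (spow x 0 = x is junk, never used) *)
Definition spow (x : S) (n : nat) : S := iter n.-1 (mul x) x.

Definition wprod (x : S) (l : seq S) : S := foldl mul x l.

(* Prod(T): products of nonempty subsequences of T taken in every order *)
Definition in_Prod (T : seq S) (a : S) : Prop :=
  exists (x : S) (l t : seq S), subseq t T /\ perm_eq (x :: l) t /\ a = wprod x l.

Definition gen (X : S -> Prop) (a : S) : Prop :=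
  exists (x : S) (l : seq S), X x /\ (forall y, y \in l -> X y) /\ a = wprod x l.

Definition gen1 (x : S) (a : S) : Prop := exists n, 0 < n /\ a = spow x n.

Definition finite_set (X : S -> Prop) : Prop := exists l : seq S, forall x, X x -> x \in l.

Definition is_index (x : S) (r : nat) : Prop :=
  0 < r /\ (exists t, 0 < t /\ t <> r /\ spow x r = spow x t) /\
  forall r', 0 < r' -> (exists t, 0 < t /\ t <> r' /\ spow x r' = spow x t) -> r <= r'.
Definition sindex (x : S) : nat := epsilon (inhabits 0) (is_index x).
Definition is_period (x : S) (k : nat) : Prop :=
  0 < k /\ spow x (sindex x + k) = spow x (sindex x) /\
  forall k', 0 < k' -> spow x (sindex x + k') = spow x (sindex x) -> k <= k'.
Definition speriod (x : S) : nat := epsilon (inhabits 0) (is_period x).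

(* the natural (Tamura) preorder and congruence N_R on a commutative semigroup R *)
Definition leN (R : S -> Prop) (a b : S) : Prop :=
  exists m c, 0 < m /\ R c /\ spow a m = mul b c.
Definition NR (R : S -> Prop) (a b : S) : Prop := leN R a b /\ leN R b a.
Definition ltN (R : S -> Prop) (a b : S) : Prop := leN R a b /\ ~ leN R b a.

(* the universal semilattice Y(R) = R / N_R (ordered by the order induced by <=_N)
   is a chain *)
Definition Y_chain (R : S -> Prop) : Prop :=
  forall a b, R a -> R b -> leN R a b \/ leN R b a.

(* C is an ideal extension of the nontrivial finite cyclic group <x2> by the
   nontrivial finite cyclic nilsemigroup generated by (the class of) x1, with
   trivial partial homomorphism: x1 * e = e. *)
Definition ideal_ext_case (C : S -> Prop) (x1 x2 : S) : Prop :=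
  let G := gen1 x2 in
  (forall g, G g -> C g) /\
  (forall a g, C a -> G g -> G (mul a g) /\ G (mul g a)) /\
  (exists e, G e /\
     (forall g, G g -> mul e g = g /\ mul g e = g) /\
     (forall g, G g -> exists h, G h /\ mul g h = e /\ mul h g = e) /\
     (exists g, G g /\ g <> e) /\
     mul x1 e = e) /\
  (* the Rees quotient C/<x2> is a nontrivial cyclic nilsemigroup generated by
     the class of x1 *)
  C x1 /\ ~ G x1 /\
  (forall b, C b -> ~ G b -> gen1 x1 b) /\
  (forall b, C b -> exists n, 0 < n /\ G (spow b n)).

Definition arch_component_ok (T : seq S) (C : S -> Prop) : Prop :=
  (exists x, x \in T /\ (forall b, C b <-> gen1 x b) /\
             sindex x = 1 %[mod speriod x])
  \/
  (exists x1 x2, x1 \in T /\ x2 \in T /\ ideal_ext_case C x1 x2).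

End Semigroup.

From mathcomp Require Import all_boot zify.
From Stdlib Require Import ClassicalEpsilon Classical.
Unset Printing Implicit Defensive.

(* Let W range over sub-multisets of T.  If no product of T is idempotent,
   then adding a letter y to W creates a new product (otherwise all powers of y, in
   particular its idempotent power, would be products of W), so |Prod(W)| >= |W|.
   Since |Prod(T)| <= |S \ E(S)| = |T|, equality holds throughout: Prod(T) is the
   set of non-idempotents, and for distinct letters y, w the set Prod(y w) = {y, w}
   forces yw = wy in {y, w}.  Hence every product is a power y^c of one letter with
   c <= v_y(T), the letters are totally ordered by absorption, and <supp T> is the
   union of the cyclic semigroups <y>; two letters fall into one archimedean
   component exactly when they share a power, which makes one of them a group
   generator of index 1.  Comparing v_y(T) with the non-idempotent powers of y that
   must be products of T gives v_y(T) = I(y) + P(y) - 2 and I(y) = 1 mod P(y).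
   Conversely, the non-idempotent powers of the letters cover S \ E(S) and number
   at most sum_y (I(y) + P(y) - 2) = |T| = |S \ E(S)|, so distinct letters share no
   non-idempotent power; the conditions then make distinct letters absorb each
   other, so every product is some y^c with 0 < c <= I(y) + P(y) - 2, which is not
   idempotent when I(y) = 1 mod P(y). *)

Lemma classic_ex_min (P : nat -> Prop) n : P n -> exists m, P m /\ forall k, P k -> m <= k.
Proof.
elim/ltn_ind: n => n IH Pn.
have [[k [Pk lt_kn]] | no_smaller] := classic (exists k, P k /\ k < n); first exact: IH Pk.
exists n; split => // k Pk; rewrite leqNgt; apply/negP => lt_kn.
by apply: no_smaller; exists k.
Qed.

Definition asbool (P : Prop) : bool := if excluded_middle_informative P then true else false.

Lemma asboolP (P : Prop) : reflect P (asbool P).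
Proof. by rewrite /asbool; case: excluded_middle_informative => H; constructor. Qed.

Lemma ltn_count (T : eqType) (a b : pred T) s :
  subpred a b -> (exists2 z, z \in s & b z && ~~ a z) -> count a s < count b s.
Proof.
move=> ab [z zs /andP [bz naz]]; elim: s zs => // y s IH; rewrite inE /=.
have ab_y : a y <= b y by case: (a y) (ab y) => // ->.
case/orP => [/eqP <- | /IH lt]; last by rewrite -addnS; apply: leq_add.
by rewrite bz (negbTE naz) add0n ltnS; apply: sub_count.
Qed.

Lemma flatten_map_disjoint (I T : eqType) (f : I -> seq T) r i j x :
  uniq (flatten (map f r)) -> i \in r -> j \in r -> x \in f i -> x \in f j -> i = j.
Proof.
elim: r => //= a r IH; rewrite cat_uniq => /and3P [_ /hasPn disj uF].
have inF k : k \in r -> x \in f k -> x \in flatten (map f r).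
  by move=> kr xk; apply/flatten_mapP; exists k.
rewrite !inE => /orP [/eqP -> | ir] /orP [/eqP -> | jr] xi xj //; last exact: IH.
- by have := disj x (inF j jr xj); rewrite xi.
- by have := disj x (inF i ir xi); rewrite xj.
Qed.

Section Semigroup.
Context {S : eqType} {mul : S -> S -> S}.
Hypothesis mulA : forall x y z, mul x (mul y z) = mul (mul x y) z.
Local Notation pw := (spow mul).
Local Notation idem a := (mul a a = a).
Local Notation ind x := (sindex mul x).
Local Notation per x := (speriod mul x).

(** * Powers, index and period *)

Lemma spow1 x : pw x 1 = x. Proof. by []. Qed.

Lemma spowS x n : 0 < n -> pw x n.+1 = mul x (pw x n).
Proof. by case: n => // n _; rewrite /spow /= iterS. Qed.

Lemma spowD x m n : 0 < m -> 0 < n -> pw x (m + n) = mul (pw x m) (pw x n).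
Proof.
elim: m => // m IH _ n0; case: m IH => [|m] IH; first by rewrite add1n spowS.
by rewrite addSn spowS ?addn_gt0 ?n0 ?orbT // IH // spowS // mulA.
Qed.

Lemma spowSr x n : 0 < n -> pw x n.+1 = mul (pw x n) x.
Proof. by move=> n0; rewrite -addn1 spowD. Qed.

Lemma spowC x m n : 0 < m -> 0 < n -> mul (pw x m) (pw x n) = mul (pw x n) (pw x m).
Proof. by move=> m0 n0; rewrite -!spowD // addnC. Qed.

Lemma spowM x m n : 0 < m -> 0 < n -> pw (pw x m) n = pw x (m * n).
Proof.
move=> m0; elim: n => // n IH _; case: n IH => [|n] IH; first by rewrite muln1.
by rewrite spowS // IH // -spowD ?muln_gt0 ?m0 //; congr pw; lia.
Qed.

Lemma spow_idem e n : idem e -> 0 < n -> pw e n = e.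
Proof.
move=> ee; elim: n => // n IH _; case: n IH => [|n] IH //.
by rewrite spowS // IH.
Qed.

Lemma spow_absorbl y w n : mul y w = y -> 0 < n -> mul (pw y n) w = pw y n.
Proof.
move=> yw; elim: n => // n IH _; case: n IH => [|n] IH //.
by rewrite spowS // -mulA IH.
Qed.

Lemma spow_absorbr y w n : mul y w = w -> 0 < n -> mul (pw y n) w = w.
Proof.
move=> yw; elim: n => // n IH _; case: n IH => [|n] IH //.
by rewrite spowS // -mulA IH.
Qed.

Lemma absorbl_spow y w n : mul y w = y -> 0 < n -> mul y (pw w n) = y.
Proof.
move=> yw; elim: n => // n IH _; case: n IH => [|n] IH //.
by rewrite spowS // mulA yw IH.
Qed.

Lemma absorbr_spow y w n : mul y w = w -> 0 < n -> mul y (pw w n) = pw w n.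
Proof.
move=> yw; elim: n => // n IH _; case: n IH => [|n] IH //.
by rewrite spowS // mulA yw.
Qed.

(* Every element of <x> is a power x^k with k < index + period. *)
Definition nonidem_powers x :=
  [seq pw x k | k <- iota 1 (ind x + per x - 1) & mul (pw x k) (pw x k) != pw x k].

Section CyclicSubsemigroup.
Context {x : S}.
Hypothesis x_periodic : exists r t, 0 < r /\ r < t /\ pw x r = pw x t.
Local Notation i := (sindex mul x).
Local Notation p := (speriod mul x).

Lemma sindexP : is_index mul x i.
Proof.
rewrite /sindex; apply: epsilon_spec.
have [r [t [r0 [lt_rt Ert]]]] := x_periodic.
pose repeated m := 0 < m /\ exists t, 0 < t /\ t <> m /\ pw x m = pw x t.
have [m [[m0 rep_m] min_m]] : exists m, repeated m /\ forall k, repeated k -> m <= k.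
  by apply: (@classic_ex_min _ r); split => //; exists t; split; [lia | split; [lia | done]].
by exists m; split => //; split => // r' r'0 rep_r'; apply: min_m.
Qed.

Lemma sindex_gt0 : 0 < i. Proof. by case: sindexP. Qed.

Lemma speriodP : is_period mul x p.
Proof.
rewrite /speriod; apply: epsilon_spec.
have [i0 [[t [t0 [ti Eit]]] min_i]] := sindexP.
have lt_it : i < t.
  case: (ltngtP i t) => // [lt_ti | eq_it]; last by case: ti.
  have := min_i t t0 (ex_intro _ i (conj i0 (conj (nesym ti) (esym Eit)))); lia.
pose returns k := 0 < k /\ pw x (i + k) = pw x i.
have [m [[m0 ret_m] min_m]] : exists m, returns m /\ forall k, returns k -> m <= k.
  by apply: (@classic_ex_min _ (t - i)); split; [lia | rewrite subnKC ?Eit // ltnW].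
by exists m; split => //; split => // k k0 ret_k; apply: min_m.
Qed.

Lemma speriod_gt0 : 0 < p. Proof. by case: speriodP. Qed.

Lemma spowDp b : i <= b -> pw x (b + p) = pw x b.
Proof.
move=> ib; have i0 := sindex_gt0; have p0 := speriod_gt0.
have [_ [Eip _]] := speriodP.
have [-> // | lt_ib] := eqVneq b i.
have bi0 : 0 < b - i by lia.
have -> : b + p = (b - i) + (i + p) by lia.
by rewrite spowD ?addn_gt0 ?i0 // Eip -spowD //; congr pw; lia.
Qed.

Lemma spowDMp a q : i <= a -> pw x (a + q * p) = pw x a.
Proof.
move=> ia; elim: q => [|q IH]; first by rewrite addn0.
by rewrite mulSn [p + _]addnC addnA spowDp ?IH // (leq_trans ia) ?leq_addr.
Qed.

Lemma spow_mod a b : i <= a -> i <= b -> a = b %[mod p] -> pw x a = pw x b.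
Proof.
wlog ab : a b / a <= b => [W ia ib Eab|ia ib].
  by case: (leqP a b) => [? | /ltnW ?]; [exact: W | symmetry; apply: W].
move=> /eqP; rewrite eq_sym eqn_mod_dvd // => /dvdnP [q Hq].
by rewrite -(subnKC ab) Hq spowDMp.
Qed.

Lemma spow_eq_lt a b : 0 < a -> a < b -> pw x a = pw x b -> i <= a /\ p %| b - a.
Proof.
move=> a0 ab Eab; have i0 := sindex_gt0; have p0 := speriod_gt0.
have ia : i <= a.
  have [_ [_ min_i]] := sindexP; apply: min_i => //.
  by exists b; split; [lia | split; [lia | done]].
split => //.
pose r := (b - a) %% p; pose q := (b - a) %/ p.
have Hd : b - a = q * p + r := divn_eq (b - a) p.
have E1 : pw x (a + r) = pw x a.
  by rewrite -(spowDMp (a + r) q) ?(leq_trans ia) ?leq_addr // Eab; congr pw; lia.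
have E2 : pw x (i + r) = pw x i.
  have ap : a <= a * p by rewrite leq_pmulr.
  rewrite -(spowDMp (i + r) a) ?leq_addr // -(spowDMp i a) //.
  have [d [d0 Ed]] : exists d, 0 < d /\ i + a * p = a + d by exists (i + a * p - a); lia.
  have -> : i + r + a * p = a + r + d by lia.
  by rewrite Ed spowD ?addn_gt0 ?a0 // E1 -spowD.
have [r0 | r_pos] := posnP r; first by apply/dvdnP; exists q; lia.
have [_ [_ min_p]] := speriodP; have := min_p r r_pos E2.
by have := ltn_pmod (b - a) p0; rewrite -/r; lia.
Qed.

Lemma spow_eq a b : 0 < a -> 0 < b -> pw x a = pw x b ->
  a = b \/ (i <= a /\ i <= b /\ a = b %[mod p]).
Proof.
move=> a0 b0 Eab; case: (ltngtP a b) => [lt_ab | lt_ba | ->]; [right | right | by left].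
- have [ia dv] := spow_eq_lt a b a0 lt_ab Eab; split => //; split; first lia.
  by apply/eqP; rewrite eq_sym eqn_mod_dvd // ltnW.
- have [ib dv] := spow_eq_lt b a b0 lt_ba (esym Eab); split; first lia; split => //.
  by apply/eqP; rewrite eqn_mod_dvd // ltnW.
Qed.

Lemma idem_spowP n : 0 < n -> idem (pw x n) <-> i <= n /\ p %| n.
Proof.
move=> n0; rewrite -spowD //; split.
  have nn0 : 0 < n + n by rewrite addn_gt0 n0.
  move=> E; have [|[ni [_ /eqP Hm]]] := spow_eq n (n + n) n0 nn0 (esym E); first lia.
  by split => //; move: Hm; rewrite eq_sym eqn_mod_dvd ?leq_addr // addnK.
move=> [ni pn]; apply: spow_mod; [lia | done |].
by apply/eqP; rewrite eqn_mod_dvd ?leq_addr // addnK.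
Qed.

Lemma idem_spow_uniq a b : 0 < a -> 0 < b ->
  idem (pw x a) -> idem (pw x b) -> pw x a = pw x b.
Proof.
move=> a0 b0 /(idem_spowP a a0) [ia /dvdnP [u Eu]] /(idem_spowP b b0) [ib /dvdnP [v Ev]].
by apply: spow_mod => //; rewrite Eu Ev !modnMl.
Qed.

Lemma idem_spow_ip : idem (pw x (i * p)).
Proof.
have i0 := sindex_gt0; have p0 := speriod_gt0.
by apply/idem_spowP; rewrite ?muln_gt0 ?i0 // leq_pmulr // dvdn_mull.
Qed.

Lemma spow_return n : 0 < n -> pw x n.+1 = x -> i = 1 /\ p %| n.
Proof.
move=> n0 E; have i0 := sindex_gt0.
case: (spow_eq 1 n.+1 isT isT (esym E)) => [|[i1 [_ /eqP]]]; first lia.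
by rewrite eq_sym eqn_mod_dvd // subn1 => ?; split; first lia.
Qed.

Lemma spow_fixed n : 0 < n -> pw x n.+1 = pw x n -> p = 1.
Proof.
move=> n0 E; have p0 := speriod_gt0.
case: (spow_eq n n.+1 n0 isT (esym E)) => [|[_ [_ /eqP]]]; first lia.
by rewrite eq_sym eqn_mod_dvd // subSnn dvdn1 => /eqP.
Qed.

Lemma exists_idem_spow : exists2 k, 0 < k <= i + p - 1 & idem (pw x k).
Proof.
have i0 := sindex_gt0; have p0 := speriod_gt0.
pose k := (i + p - 1) %/ p * p.
have Hd := divn_eq (i + p - 1) p; have := ltn_pmod (i + p - 1) p0.
exists k; first lia.
by apply/idem_spowP; [lia | split; [lia | rewrite dvdn_mull]].
Qed.

Lemma nonidem_prefix_bound v : (forall k, 0 < k <= v -> ~ idem (pw x k)) -> v <= i + p - 2.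
Proof.
move=> nonidem; have [k /andP [k0 kb] ek] := exists_idem_spow.
by rewrite leqNgt; apply/negP => lt; apply: (nonidem k) => //; lia.
Qed.

Lemma nonidem_prefix k : i = 1 %[mod p] -> 0 < k <= i + p - 2 -> ~ idem (pw x k).
Proof.
move=> i1 /andP [k0 kb] /(idem_spowP k k0) [ik /dvdnP [s Hs]].
have p0 := speriod_gt0.
case: (ltnP 1 p) => p1; last lia.
move: i1; rewrite (modn_small p1) => i1.
have Hd := divn_eq i p; rewrite i1 in Hd.
have lt_qs : i %/ p < s by rewrite -(ltn_pmul2r p0); lia.
have : (i %/ p).+1 * p <= s * p by rewrite leq_pmul2r.
by rewrite mulSn; lia.
Qed.

Lemma idem_index_period : idem x -> i = 1 /\ p = 1.
Proof.
move=> /(idem_spowP 1 isT) [i1]; rewrite dvdn1 => /eqP p1.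
by have := sindex_gt0; split => //; lia.
Qed.

Lemma index1_unit m : i = 1 -> 0 < m ->
  mul (pw x p) (pw x m) = pw x m /\ mul (pw x m) (pw x p) = pw x m.
Proof.
move=> i1 m0; have p0 := speriod_gt0.
suff E : mul (pw x p) (pw x m) = pw x m by split; rewrite // spowC.
by rewrite -spowD //; apply: spow_mod; rewrite ?i1 ?modnDl //; lia.
Qed.

Lemma index1_inverse m : i = 1 -> 0 < m -> mul (pw x m) (pw x (p * m.+1 - m)) = pw x p.
Proof.
move=> i1 m0; have p0 := speriod_gt0.
have lt_m : m < p * m.+1 by rewrite mulnS; nia.
rewrite -spowD; [ | done | lia]; have -> : m + (p * m.+1 - m) = p * m.+1 by lia.
by apply: spow_mod; rewrite ?i1 ?modnMr ?modnn //; nia.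
Qed.

Lemma size_nonidem_powers : size (nonidem_powers x) <= i + p - 2.
Proof.
have [k /andP [k0 kb] ek] := exists_idem_spow.
rewrite size_map size_filter.
suff : count (fun k => mul (pw x k) (pw x k) != pw x k) (iota 1 (i + p - 1)) < i + p - 1 by lia.
rewrite -[X in _ < X](size_iota 1) -count_predT; apply: ltn_count => //.
exists k; first by rewrite mem_iota; lia.
by rewrite /= ek eqxx.
Qed.

Lemma mem_nonidem_powers n : 0 < n -> ~ idem (pw x n) -> pw x n \in nonidem_powers x.
Proof.
move=> n0 ni; have i0 := sindex_gt0; have p0 := speriod_gt0.
have [k /andP [k0 kb] Ek] : exists2 k, 0 < k <= i + p - 1 & pw x n = pw x k.
  case: (leqP n (i + p - 1)) => nb; first by exists n; rewrite ?n0.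
  exists (i + (n - i) %% p); first by have := ltn_pmod (n - i) p0; lia.
  by apply: spow_mod; [lia | lia | rewrite modnDmr; congr modn; lia].
rewrite Ek; apply/mapP; exists k => //; rewrite mem_filter mem_iota.
by apply/andP; split; [apply/eqP; rewrite -Ek | lia].
Qed.

End CyclicSubsemigroup.

(** * Products of sub-multisets *)

Lemma wprod_rcons x l y : wprod mul x (rcons l y) = mul (wprod mul x l) y.
Proof. by rewrite /wprod foldl_rcons. Qed.

Lemma wprod_nseq x n : wprod mul x (nseq n x) = pw x n.+1.
Proof.
have foldl_nseq m k : 0 < m -> foldl mul (pw x m) (nseq k x) = pw x (m + k).
  elim: k m => [|k IH] m m0 /=; first by rewrite addn0.
  by rewrite -spowSr // IH // addnS.
by rewrite /wprod -[x in foldl _ x]spow1 foldl_nseq.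
Qed.

Definition submseq (u W : seq S) := forall z, count_mem z u <= count_mem z W.

Definition prod_of (W : seq S) (a : S) :=
  exists x l, submseq (x :: l) W /\ a = wprod mul x l.

Lemma in_ProdE W a : in_Prod mul W a <-> prod_of W a.
Proof.
split=> [[x [l [t [sub_tW [perm_t ->]]]]] | [x [l [sub_W ->]]]].
  by exists x, l; split => // z; rewrite (permP perm_t) leq_count_subseq.
by have [t sub_tW perm_t] := (count_subseqP (x :: l) W).1 sub_W; exists x, l, t.
Qed.

Lemma prod_of_sub W W' a : submseq W W' -> prod_of W a -> prod_of W' a.
Proof.
by move=> WW' [x [l [sub_W ->]]]; exists x, l; split => // z; apply: leq_trans (WW' z).
Qed.

Lemma prod_of_mem W y : y \in W -> prod_of W y.
Proof.
move=> yW; exists y, [::]; split => // z /=; rewrite addn0.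
by case: eqP => //= <-; rewrite -has_count has_pred1.
Qed.

Lemma mem_submseq u W z : submseq u W -> z \in u -> z \in W.
Proof. by move=> uW; rewrite -!has_pred1 !has_count => /leq_trans; apply. Qed.

Section AbsorbingWords.
Variable A : S -> Prop.
Hypothesis A_absorbing : forall y w, A y -> A w -> y <> w ->
  mul y w = mul w y /\ (mul y w = y \/ mul y w = w).

Lemma wprod_absorbing x l : A x -> (forall z, z \in l -> A z) ->
  exists2 y, y \in x :: l & wprod mul x l = pw y (count_mem y (x :: l)) /\
    (forall z, z \in x :: l -> z <> y -> mul y z = y).
Proof.
move=> Ax; elim/last_ind: l => [|l w IH] Al.
  by exists x; rewrite ?mem_head //= eqxx; split => // z; rewrite inE => /eqP.
have Al' z : z \in l -> A z by move=> zl; apply: Al; rewrite mem_rcons inE zl orbT.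
have [y yl [E M]] := IH Al'.
have Aw : A w by apply: Al; rewrite mem_rcons mem_head.
have Ay : A y by move: yl; rewrite inE => /orP [/eqP -> // | /Al'].
have c0 : 0 < count_mem y (x :: l) by rewrite -has_count has_pred1.
rewrite wprod_rcons E -rcons_cons.
have count_w z : count_mem z (rcons (x :: l) w) = count_mem z (x :: l) + (w == z).
  by rewrite -cats1 count_cat /= addn0.
have mem_w z : (z \in rcons (x :: l) w) = (z \in x :: l) || (z == w).
  by rewrite mem_rcons inE orbC.
have [ewy | wy] := eqVneq w y.
  subst w; exists y; rewrite ?mem_w ?yl //; split; first by rewrite count_w eqxx addn1 spowSr.
  by move=> z; rewrite mem_w => /orP [/M | /eqP ->].
have [yw_comm [yw | yw]] := A_absorbing y w Ay Aw (nesym (elimN eqP wy)).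
  exists y; rewrite ?mem_w ?yl //; split; first by rewrite count_w (negbTE wy) addn0 spow_absorbl.
  by move=> z; rewrite mem_w => /orP [/M | /eqP ->].
have w_new : w \notin x :: l.
  by apply/negP => /M /(_ (elimN eqP wy)); rewrite yw => /eqP; rewrite (negbTE wy).
exists w; rewrite ?mem_w ?eqxx ?orbT //; split.
  by rewrite count_w eqxx (count_memPn w_new) spow_absorbr.
have wy_w : mul w y = w by rewrite -yw_comm.
move=> z; rewrite mem_w => /orP [zl zw | /eqP -> //].
have [-> // | zy] := eqVneq z y.
by rewrite -{1}wy_w -mulA (M z zl (elimN eqP zy)) wy_w.
Qed.

End AbsorbingWords.

Section ProductFreeSequences.
Variables NE T : seq S.
Hypothesis NE_uniq : uniq NE.
Hypothesis NE_def : forall x, x \in NE <-> mul x x <> x.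
Hypothesis size_T : size T = size NE.

Lemma spow_periodic x : exists r t, 0 < r /\ r < t /\ pw x r = pw x t.
Proof.
apply: NNPP => aperiodic.
have pw_inj r t : 0 < r -> r < t -> pw x r <> pw x t.
  by move=> r0 rt E; apply: aperiodic; exists r, t.
pose L := map (pw x) (iota 1 (size NE).+1).
have uniq_L : uniq L.
  rewrite map_inj_in_uniq ?iota_uniq // => a b.
  rewrite !mem_iota => /andP [a1 _] /andP [b1 _] E.
  by case: (ltngtP a b) => // ab; [case: (pw_inj a b) | case: (pw_inj b a)].
have sub_L : {subset L <= NE}.
  move=> y /mapP [k]; rewrite mem_iota => /andP [k1 _] ->.
  by apply/NE_def; rewrite -spowD // => E; apply: (pw_inj k (k + k)); rewrite ?E //; lia.
by have := uniq_leq_size uniq_L sub_L; rewrite size_map size_iota ltnn.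
Qed.

Local Notation R := (gen mul (fun y => y \in T)).

Lemma R_spow y n : y \in T -> 0 < n -> R (pw y n).
Proof.
move=> yT n0; exists y, (nseq n.-1 y); split => //; split; first by move=> z /nseqP [->].
by rewrite wprod_nseq prednK.
Qed.

Lemma ideal_ext_case_spec (C : S -> Prop) x1 x2 : ideal_ext_case mul C x1 x2 ->
  [/\ forall b, C b -> gen1 mul x2 b \/ gen1 mul x1 b, mul x1 x2 = x2, ind x2 = 1 & per x1 = 1].
Proof.
move=> [_ [_ [[e [[j [j0 Ge]] [e_unit [_ [_ x1e]]]]] [Cx1 [_ [C_nil C_pow]]]]]].
have [ex2 _] := e_unit x2 (ex_intro _ 1 (conj isT erefl)).
split.
- by move=> b Cb; case: (classic (gen1 mul x2 b)) => G2; [left | right; apply: C_nil].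
- by rewrite -{1}ex2 mulA x1e.
- have : pw x2 j.+1 = x2 by rewrite spowS // -{1}(spow1 x2) spowC // -Ge.
  by move/(spow_return (spow_periodic x2) j j0) => [].
have [n [n0 Gn]] := C_pow x1 Cx1; have [_ x1n_e] := e_unit _ Gn.
have x1n : pw x1 n = e by rewrite -x1n_e spow_absorbr.
by apply: (spow_fixed (spow_periodic x1) n n0); rewrite spowS // x1n.
Qed.

Lemma leN_absorbed a b : R a -> mul b a = a -> leN mul R a b.
Proof. by move=> Ra ba; exists 1, a. Qed.

(** * Sequences without idempotent products *)

Section Forward.
Hypothesis T_prod_free : forall a, prod_of T a -> ~ idem a.

(* The size of Prod(W), as long as Prod(W) has no idempotent. *)
Definition nprod W := count (fun a => asbool (prod_of W a)) NE.

Lemma prod_cons_new W y : submseq (y :: W) T -> exists a, prod_of (y :: W) a /\ ~ prod_of W a.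
Proof.
move=> sub_T; apply: NNPP => no_new.
have old a : prod_of (y :: W) a -> prod_of W a.
  by move=> Pa; apply: NNPP => nPa; apply: no_new; exists a.
have pows n : prod_of W (pw y n.+1).
  elim: n => [|n [x [l [sub_W E]]]]; apply: old; first exact/prod_of_mem/mem_head.
  exists x, (rcons l y); split; last by rewrite wprod_rcons -E spowSr.
  move=> z; have := sub_W z; rewrite -cats1 /= count_cat /= addn0.
  by case: (y == z) => /=; lia.
have py := spow_periodic y.
have ip0 : 0 < ind y * per y by rewrite muln_gt0 (sindex_gt0 py) (speriod_gt0 py).
apply: (T_prod_free (pw y (ind y * per y))); last exact: idem_spow_ip py.
apply: prod_of_sub (_ : submseq W T) _; last by rewrite -(prednK ip0).
by move=> z; apply: leq_trans (sub_T z); rewrite /= leq_addl.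
Qed.

Lemma nprod_cons W y : submseq (y :: W) T -> nprod W < nprod (y :: W).
Proof.
move=> sub_T; have [a [Pa nPa]] := prod_cons_new _ _ sub_T.
apply: ltn_count.
  move=> b /asboolP Pb; apply/asboolP; apply: prod_of_sub Pb.
  by move=> z /=; rewrite leq_addl.
exists a; last by apply/andP; split; apply/asboolP.
by apply/NE_def/T_prod_free/(prod_of_sub _ _ _ sub_T).
Qed.

Lemma nprod_cat D W : submseq (D ++ W) T -> nprod W + size D <= nprod (D ++ W).
Proof.
elim: D => [|d D IH] /= sub_T; first by rewrite addn0.
have sub_T' : submseq (D ++ W) T.
  by move=> z; apply: leq_trans (sub_T z); rewrite /= leq_addl.
by have := IH sub_T'; have := nprod_cons _ _ sub_T; rewrite addnS; lia.
Qed.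

Lemma nprod_le_size W : submseq W T -> nprod W <= size W.
Proof.
move=> /count_subseqP [t sub_t perm_t]; have [D perm_T] := perm_to_subseq sub_t.
have perm_DW : perm_eq T (D ++ W).
  by apply: perm_trans perm_T _; rewrite perm_catC perm_cat2l perm_sym.
have sub_DW : submseq (D ++ W) T by move=> z; rewrite (permP perm_DW).
have := nprod_cat D W sub_DW.
have : nprod (D ++ W) <= size T by rewrite size_T count_size.
by rewrite (perm_size perm_DW) size_cat; lia.
Qed.

(* Prod(T) has at least |T| = |NE| elements, none of them idempotent. *)
Lemma nonidem_prodT a : ~ idem a -> prod_of T a.
Proof.
move=> na; have := nprod_cat T [::]; rewrite cats0 /nprod => /(_ (fun z => leqnn _)) le_count.
have /allP all_NE : all (fun a => asbool (prod_of T a)) NE.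
  by rewrite all_count eqn_leq count_size -size_T /=; lia.
by apply/asboolP/all_NE/NE_def.
Qed.

Lemma T_nonidem y : y \in T -> ~ idem y.
Proof. by move=> /prod_of_mem; apply: T_prod_free. Qed.

(* Prod(y w) has at most two elements, so it is {y, w}. *)
Lemma T_absorbing y w : y \in T -> w \in T -> y <> w ->
  mul y w = mul w y /\ (mul y w = y \/ mul y w = w).
Proof.
move=> yT wT yw.
have yw' : y != w by apply/eqP.
have sub_T : submseq [:: y; w] T.
  apply: leq_uniq_count; first by rewrite /= inE yw'.
  by move=> z; rewrite !inE => /orP [/eqP -> | /eqP ->].
have in_NE b : prod_of [:: y; w] b -> b \in NE.
  by move=> Pb; apply/NE_def/T_prod_free/(prod_of_sub _ _ _ sub_T).
have prod_yw a : prod_of [:: y; w] a -> a = y \/ a = w.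
  move=> Pa; apply: NNPP => /not_or_and [ay aw].
  have : size [:: y; w; a] <= nprod [:: y; w].
    rewrite /nprod -size_filter; apply: uniq_leq_size.
      by rewrite /= !inE !negb_or yw' andbT; apply/andP; split; apply/eqP => /esym.
    move=> b b_in; have Pb : prod_of [:: y; w] b.
      move: b_in; rewrite !inE => /or3P [] /eqP -> //;
        by apply: prod_of_mem; rewrite !inE eqxx ?orbT.
    by rewrite mem_filter in_NE // andbT; apply/asboolP.
  by have := nprod_le_size _ sub_T; rewrite /=; lia.
have Pyw : prod_of [:: y; w] (mul y w) by exists y, [:: w]; split => // z.
have Pwy : prod_of [:: y; w] (mul w y) by exists w, [:: y]; split => // z /=; lia.
have ny := T_nonidem y yT.
case: (prod_yw _ Pyw) => E1; case: (prod_yw _ Pwy) => E2.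
- by split; [rewrite E1 E2 | left].
- by case: ny; rewrite -{1}E1 -mulA E2 E1.
- by case: ny; rewrite -{2}E2 mulA E1 E2.
- by split; [rewrite E1 E2 | right].
Qed.

Lemma prodT_spow a : prod_of T a ->
  exists2 y, y \in T & exists2 c, 0 < c <= count_mem y T & a = pw y c.
Proof.
move=> [x [l [sub_T ->]]].
have inT z : z \in x :: l -> z \in T by apply: mem_submseq.
have [y yl [-> _]] := wprod_absorbing _ T_absorbing x l (inT x (mem_head _ _))
  (fun z zl => inT z (mem_behead (s := x :: l) zl)).
exists y; first exact: inT.
by exists (count_mem y (x :: l)); rewrite ?sub_T ?andbT // -has_count has_pred1.
Qed.

Lemma spow_prodT y k : y \in T -> 0 < k <= count_mem y T -> prod_of T (pw y k).
Proof.
move=> yT /andP [k0 kc]; exists y, (nseq k.-1 y); split; last by rewrite wprod_nseq prednK.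
by move=> z; rewrite /= count_nseq; case: (eqVneq y z) => [<- |] /=; lia.
Qed.

Lemma common_spow_return y w n m : y \in T -> w \in T -> y <> w -> mul y w = y ->
  0 < n -> 0 < m -> pw y n = pw w m -> pw y n.+1 = y.
Proof.
move=> yT wT yw yw_y n0 m0 E.
have [yw_comm _] := T_absorbing y w yT wT yw.
by rewrite spowSr // E spow_absorbr // -yw_comm.
Qed.

Lemma common_spow_nonidem y w n m : y \in T -> w \in T -> y <> w -> 0 < n -> 0 < m ->
  pw y n = pw w m -> ~ idem (pw y n) -> mul y w = y /\ ind y = 1 /\ per y %| n.
Proof.
move=> yT wT yw n0 m0 E ni.
have [yw_comm [yw_y | yw_w]] := T_absorbing y w yT wT yw.
  by split => //; apply: (spow_return (spow_periodic y) n n0);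
    apply: (common_spow_return y w n m yT wT yw yw_y n0 m0 E).
have wy_w : mul w y = w by rewrite -yw_comm.
have [iw pw_m] := spow_return (spow_periodic w) m m0
  (common_spow_return w y m n wT yT (nesym yw) wy_w m0 n0 (esym E)).
by case: ni; rewrite E; apply/(idem_spowP (spow_periodic w) m m0); rewrite iw.
Qed.

Lemma beyond_count x k : x \in T -> count_mem x T < k <= ind x + per x - 1 ->
  ~ idem (pw x k) -> ind x = 1 /\ per x %| k.
Proof.
move=> xT /andP [vk ki] ni; have k0 : 0 < k by lia.
have [y yT [c /andP [c0 cv] E]] := prodT_spow _ (nonidem_prodT _ ni).
have [exy | xy] := eqVneq x y; last first.
  by have [_ []] := common_spow_nonidem x y k c xT yT (elimN eqP xy) k0 c0 E ni.
subst y; have px := spow_periodic x.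
have [|[_ [ic /eqP]]] := spow_eq px k c k0 c0 E; first lia.
have kc0 : 0 < k - c by lia.
rewrite eqn_mod_dvd; last lia.
by move=> /(dvdn_leq kc0) ?; exfalso; lia.
Qed.

Lemma count_T_spec x : x \in T ->
  ind x = 1 %[mod per x] /\ count_mem x T = ind x + per x - 2.
Proof.
move=> xT; have px := spow_periodic x.
have v0 : 0 < count_mem x T by rewrite -has_count has_pred1.
have i0 := sindex_gt0 px; have p0 := speriod_gt0 px.
have v_le : count_mem x T <= ind x + per x - 2.
  by apply: (nonidem_prefix_bound px) => k kv; apply/T_prod_free/spow_prodT.
have p_dvd : per x %| ind x + per x - 1.
  case: (boolP (per x %| ind x + per x - 1)) => // ndvd.
  have k0 : 0 < ind x + per x - 1 by lia.
  have ni : ~ idem (pw x (ind x + per x - 1)).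
    by move=> /(idem_spowP px _ k0) [_ dvd]; rewrite dvd in ndvd.
  have vk : count_mem x T < ind x + per x - 1 <= ind x + per x - 1 by rewrite leqnn andbT; lia.
  by have [i1 _] := beyond_count _ _ xT vk ni; rewrite i1 add1n subn1 dvdnn in ndvd.
have i_cong : ind x = 1 %[mod per x].
  move: p_dvd; have -> : ind x + per x - 1 = (ind x - 1) + per x by lia.
  by rewrite dvdn_addl // => p_dvd; apply/eqP; rewrite eqn_mod_dvd // subn1.
split => //; apply/eqP; rewrite eqn_leq v_le /= leqNgt; apply/negP => lt_v.
have ni : ~ idem (pw x (count_mem x T).+1).
  by apply: (nonidem_prefix px); rewrite // ltn0Sn.
have vk : count_mem x T < (count_mem x T).+1 <= ind x + per x - 1 by rewrite ltnSn /=; lia.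
by have [i1 /(dvdn_leq (ltn0Sn _)) le_p] := beyond_count _ _ xT vk ni; lia.
Qed.

Lemma R_spowP a : R a <-> exists2 y, y \in T & exists2 n, 0 < n & a = pw y n.
Proof.
split=> [[x [l [xT [lT ->]]]] | [y yT [n n0 ->]]]; last exact: R_spow.
have [y yl [-> _]] := wprod_absorbing _ T_absorbing x l xT lT.
exists y; first by move: yl; rewrite inE => /orP [/eqP -> | /lT].
by exists (count_mem y (x :: l)); rewrite // -has_count has_pred1.
Qed.

Lemma T_spow_absorbing y w n m : y \in T -> w \in T -> y <> w -> mul y w = y ->
  0 < n -> 0 < m -> mul (pw y n) (pw w m) = pw y n /\ mul (pw w m) (pw y n) = pw y n.
Proof.
move=> yT wT yw yw_y n0 m0; have [yw_comm _] := T_absorbing y w yT wT yw.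
split; first by apply: spow_absorbl => //; apply: absorbl_spow.
by apply: absorbr_spow => //; apply: spow_absorbr; rewrite -?yw_comm.
Qed.

Lemma T_spow_comparable y w n m : y \in T -> w \in T -> 0 < n -> 0 < m ->
  [\/ y = w,
      mul (pw y n) (pw w m) = pw y n /\ mul (pw w m) (pw y n) = pw y n
    | mul (pw w m) (pw y n) = pw w m /\ mul (pw y n) (pw w m) = pw w m].
Proof.
move=> yT wT n0 m0; have [-> | /eqP yw] := eqVneq y w; first exact: Or31.
have [yw_comm [yw_y | yw_w]] := T_absorbing y w yT wT yw.
  by apply: Or32; apply: T_spow_absorbing.
by apply: Or33; apply: T_spow_absorbing => //; [exact: nesym | rewrite -yw_comm].
Qed.

Lemma R_comm a b : R a -> R b -> mul a b = mul b a.
Proof.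
move=> /R_spowP [y yT [n n0 ->]] /R_spowP [w wT [m m0 ->]].
by case: (T_spow_comparable y w n m yT wT n0 m0) => [<- | [-> ->] | [-> ->]] //; apply: spowC.
Qed.

Lemma notR_idem a : ~ R a -> idem a.
Proof.
move=> nRa; apply: NNPP => na; apply: nRa.
have [y yT [c /andP [c0 _] ->]] := prodT_spow _ (nonidem_prodT _ na).
exact: R_spow.
Qed.

Lemma R_finite : finite_set R.
Proof.
exists (NE ++ [seq pw y (ind y * per y) | y <- T]) => b /R_spowP [y yT [n n0 ->]].
have py := spow_periodic y.
rewrite mem_cat; case: (classic (idem (pw y n))) => [ey | /NE_def -> //].
apply/orP; right; apply/mapP; exists y => //.
apply: (idem_spow_uniq py) => //; last exact: idem_spow_ip.
by rewrite muln_gt0 (sindex_gt0 py) (speriod_gt0 py).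
Qed.

Lemma leN_spow y n m : y \in T -> 0 < n -> 0 < m -> leN mul R (pw y n) (pw y m).
Proof.
move=> yT n0 m0; have lt : m < n * m.+1 by rewrite mulnS; nia.
exists m.+1, (pw y (n * m.+1 - m)); split => //; split; first by apply: R_spow; lia.
by rewrite spowM // -spowD; [congr pw | | ]; lia.
Qed.

Lemma R_chain : Y_chain mul R.
Proof.
move=> a b /R_spowP [y yT [n n0 ->]] /R_spowP [w wT [m m0 ->]].
case: (T_spow_comparable y w n m yT wT n0 m0) => [<- | [_ E] | [_ E]].
- by left; apply: leN_spow.
- by left; apply: leN_absorbed => //; apply: R_spow.
- by right; apply: leN_absorbed => //; apply: R_spow.
Qed.

Lemma ltN_absorb a b : R a -> R b -> ltN mul R a b -> mul a b = a.
Proof.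
move=> /R_spowP [y yT [n n0 ->]] /R_spowP [w wT [m m0 ->]] [_ nle].
case: (T_spow_comparable y w n m yT wT n0 m0) => [ewy | [-> _] // | [_ E]].
  by subst w; case: nle; apply: leN_spow.
by case: nle; apply: leN_absorbed => //; apply: R_spow.
Qed.

Definition partners y w := y <> w /\ exists j k, 0 < j /\ 0 < k /\ pw y j = pw w k.

Lemma partners_sym y w : partners y w -> partners w y.
Proof. by move=> [yw [j [k [j0 [k0 E]]]]]; split; [apply: nesym | exists k, j]. Qed.

Lemma common_spow_absorbing y w j k : y \in T -> w \in T -> y <> w -> mul y w = y ->
  0 < j -> 0 < k -> pw y j = pw w k -> ind y = 1 /\ idem (pw y j).
Proof.
move=> yT wT yw yw_y j0 k0 E; have py := spow_periodic y.
have [i1 pj] := spow_return py j j0 (common_spow_return y w j k yT wT yw yw_y j0 k0 E).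
by split => //; apply/(idem_spowP py j j0); rewrite i1.
Qed.

Lemma common_spow_idem y w j k : y \in T -> w \in T -> y <> w -> 0 < j -> 0 < k ->
  pw y j = pw w k -> idem (pw y j).
Proof.
move=> yT wT yw j0 k0 E.
have [yw_comm [yw_y | yw_w]] := T_absorbing y w yT wT yw.
  by have [_ ->] := common_spow_absorbing y w j k yT wT yw yw_y j0 k0 E.
have wy_w : mul w y = w by rewrite -yw_comm.
by rewrite E; have [_ ->] := common_spow_absorbing w y k j wT yT (nesym yw) wy_w k0 j0 (esym E).
Qed.

(* The middle element m would equal the common idempotent power of l and t. *)
Lemma no_common_spow_across l m t j k : l \in T -> m \in T -> t \in T -> l <> m -> m <> t ->
  mul l m = l -> mul m t = m -> 0 < j -> 0 < k -> pw l j <> pw t k.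
Proof.
move=> lT mT tT lm mt lm_l mt_m j0 k0 E.
have lt_l : mul l t = l by rewrite -{1}lm_l -mulA mt_m lm_l.
have [lm_comm _] := T_absorbing l m lT mT lm.
have lt : l <> t by move=> elt; subst t; apply: lm; rewrite -lm_l lm_comm mt_m.
have [_ idem_lj] := common_spow_absorbing l t j k lT tT lt lt_l j0 k0 E.
apply: (T_nonidem m mT); suff -> : m = pw l j by [].
rewrite -{1}(absorbl_spow m t k mt_m k0) -E.
by apply: absorbr_spow => //; rewrite -lm_comm.
Qed.

Lemma T_absorbing_dir u v : u \in T -> v \in T -> u <> v -> mul u v = u \/ mul v u = v.
Proof.
move=> uT vT uv; have [uv_comm [uv_u | uv_v]] := T_absorbing u v uT vT uv; first by left.
by right; rewrite -uv_comm.
Qed.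

Lemma no_three_common a b c ja jb jc : a \in T -> b \in T -> c \in T ->
  a <> b -> b <> c -> a <> c -> 0 < ja -> 0 < jb -> 0 < jc ->
  pw a ja = pw b jb -> pw b jb <> pw c jc.
Proof.
move=> aT bT cT ab bc ac ja0 jb0 jc0 Eab Ebc.
have Eac : pw a ja = pw c jc by rewrite Eab.
have across := no_common_spow_across.
case: (T_absorbing_dir a b aT bT ab) => H1; case: (T_absorbing_dir b c bT cT bc) => H2.
- exact: (across a b c ja jc aT bT cT ab bc H1 H2).
- case: (T_absorbing_dir a c aT cT ac) => H3.
  + exact: (across a c b ja jb aT cT bT ac (nesym bc) H3 H2).
  + exact: (across c a b jc jb cT aT bT (nesym ac) ab H3 H1 jc0 jb0 (esym Ebc)).
- case: (T_absorbing_dir a c aT cT ac) => H3.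
  + exact: (across b a c jb jc bT aT cT (nesym ab) ac H1 H3).
  + exact: (across b c a jb ja bT cT aT bc (nesym ac) H2 H3 jb0 ja0 (esym Eab)).
- exact: (across c b a jc ja cT bT aT (nesym bc) (nesym ab) H2 H1 jc0 ja0 (esym Eac)).
Qed.

Lemma partners_uniq y w w' : y \in T -> w \in T -> w' \in T ->
  partners y w -> partners y w' -> w = w'.
Proof.
move=> yT wT w'T [yw [j [k [j0 [k0 E]]]]] [yw' [j' [k' [j0' [k0' E']]]]].
apply: NNPP => ww'.
have Eyy := idem_spow_uniq (spow_periodic y) j j' j0 j0'
  (common_spow_idem y w j k yT wT yw j0 k0 E) (common_spow_idem y w' j' k' yT w'T yw' j0' k0' E').
by apply: (no_three_common y w w' j k k' yT wT w'T yw ww' yw' j0 k0 k0' E); rewrite -E Eyy.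
Qed.

Lemma NR_spow y n m : y \in T -> 0 < n -> 0 < m -> NR mul R (pw y n) (pw y m).
Proof. by move=> yT n0 m0; split; apply: leN_spow. Qed.

Lemma NR_partners_absorbing y w n m : y \in T -> w \in T -> partners y w -> mul y w = y ->
  0 < n -> 0 < m -> NR mul R (pw y n) (pw w m).
Proof.
move=> yT wT [yw [j [k [j0 [k0 E]]]]] yw_y n0 m0; have py := spow_periodic y.
have [_ wm_yn] := T_spow_absorbing y w n m yT wT yw yw_y n0 m0.
split; first exact: leN_absorbed _ _ (R_spow y n yT n0) wm_yn.
have [i1 idem_j] := common_spow_absorbing y w j k yT wT yw yw_y j0 k0 E.
have p0 := speriod_gt0 py.
have pos : 0 < per y * n.+1 - n by rewrite subn_gt0 mulnS; nia.
exists k, (pw y (per y * n.+1 - n)); split => //; split; first exact: R_spow.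
rewrite index1_inverse // spowM // mulnC -spowM // -E spow_idem //.
by apply: (idem_spow_uniq py) => //; apply/(idem_spowP py _ p0); rewrite i1.
Qed.

Lemma NR_partners y w n m : y \in T -> w \in T -> partners y w -> 0 < n -> 0 < m ->
  NR mul R (pw y n) (pw w m).
Proof.
move=> yT wT Pyw n0 m0; have [yw_comm [yw_y | yw_w]] := T_absorbing y w yT wT Pyw.1.
  exact: NR_partners_absorbing.
have [] := NR_partners_absorbing w y m n wT yT (partners_sym _ _ Pyw) _ m0 n0; last by split.
by rewrite -yw_comm.
Qed.

Lemma partners_of_leN y w n m : y \in T -> w \in T -> y <> w -> mul y w = y ->
  0 < n -> 0 < m -> leN mul R (pw w m) (pw y n) -> partners y w.
Proof.
move=> yT wT yw yw_y n0 m0 [M [c [M0 [/R_spowP [u uT [k k0 ->]] E]]]].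
rewrite spowM // in E; have mM : 0 < m * M by rewrite muln_gt0 m0.
split => //; have [euy | /eqP uy] := eqVneq u y.
  by subst u; rewrite -spowD // in E; exists (n + k), (m * M); rewrite addn_gt0 n0.
have [yu_comm [yu_y | yu_u]] := T_absorbing y u yT uT (nesym uy).
  have [E2 _] := T_spow_absorbing y u n k yT uT (nesym uy) yu_y n0 k0.
  by rewrite E2 in E; exists n, (m * M).
have uy_u : mul u y = u by rewrite -yu_comm.
have [_ E2] := T_spow_absorbing u y k n uT yT uy uy_u k0 n0.
rewrite E2 in E; exfalso.
have uw : u <> w by move=> euw; subst u; apply: yw; rewrite -yw_y yu_comm uy_u.
exact: (no_common_spow_across u y w k (m * M) uT yT wT uy yw uy_u yw_y k0 mM (esym E)).
Qed.

Lemma partners_of_NR y w n m : y \in T -> w \in T -> y <> w -> 0 < n -> 0 < m ->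
  NR mul R (pw y n) (pw w m) -> partners y w.
Proof.
move=> yT wT yw n0 m0 [le_yw le_wy].
have [yw_comm [yw_y | yw_w]] := T_absorbing y w yT wT yw.
  exact: (partners_of_leN y w n m).
by apply/partners_sym/(partners_of_leN w y m n) => //; [exact: nesym | rewrite -yw_comm].
Qed.

Lemma NR_spowP y n u k : y \in T -> u \in T -> 0 < n -> 0 < k ->
  (R (pw u k) /\ NR mul R (pw y n) (pw u k)) <-> (u = y \/ partners y u).
Proof.
move=> yT uT n0 k0; split=> [[_ N_yu] | [-> | Pyu]]; last 2 first.
- by split; [exact: R_spow | exact: NR_spow].
- by split; [exact: R_spow | exact: NR_partners].
have [-> | /eqP uy] := eqVneq u y; first by left.
by right; apply: (partners_of_NR y u n k) => //; exact: nesym.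
Qed.

Lemma ideal_ext_partners (C : S -> Prop) x1 x2 : x1 \in T -> x2 \in T ->
  partners x2 x1 -> mul x2 x1 = x2 ->
  (forall b, C b <-> gen1 mul x1 b \/ gen1 mul x2 b) -> ideal_ext_case mul C x1 x2.
Proof.
move=> x1T x2T [x21 [j [k [j0 [k0 Ej]]]]] x21_x2 C_def; have p2 := spow_periodic x2.
have [i1 _] := common_spow_absorbing x2 x1 j k x2T x1T x21 x21_x2 j0 k0 Ej.
have [x21_comm _] := T_absorbing x2 x1 x2T x1T x21.
have p0 := speriod_gt0 p2.
have idem_x2 n : 0 < n -> per x2 %| n -> idem (pw x2 n).
  by move=> n0 pn; apply/(idem_spowP p2 _ n0); rewrite i1.
split; first by move=> g G; apply/C_def; right.
split.
  move=> a g /C_def [[m [m0 ->]] | [m [m0 ->]]] [m' [m0' ->]].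
    have [-> ->] := T_spow_absorbing x2 x1 m' m x2T x1T x21 x21_x2 m0' m0.
    by split; exists m'.
  by rewrite -!spowD //; split; [exists (m + m') | exists (m' + m)]; split => //; lia.
split.
  exists (pw x2 (per x2)); split; first by exists (per x2).
  split; first by move=> g [m [m0 ->]]; apply: (index1_unit p2).
  split.
    move=> g [m [m0 ->]]; exists (pw x2 (per x2 * m.+1 - m)).
    have pos : 0 < per x2 * m.+1 - m by rewrite subn_gt0 mulnS; nia.
    split; first by exists (per x2 * m.+1 - m).
    by have inv := index1_inverse p2 m i1 m0; split; rewrite // spowC.
  split; last by apply: absorbr_spow; rewrite -?x21_comm.
  exists x2; split; first by exists 1.
  by move=> E; apply: (T_nonidem x2 x2T); rewrite E; apply: idem_x2.
split; first by apply/C_def; left; exists 1.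
split.
  move=> [m [m0 E]]; apply: (T_nonidem x1 x1T); rewrite E; apply: idem_x2 => //.
  by have [] := spow_return p2 m m0 (_ : pw x2 m.+1 = x2); rewrite // spowS // -E.
split; first by move=> b /C_def [].
move=> b /C_def [[m [m0 ->]] | [m [m0 ->]]]; last by exists 1; split => //; exists m.
exists k; split => //; exists (j * m); split; first by rewrite muln_gt0 j0.
by rewrite spowM // mulnC -spowM // -Ej spowM.
Qed.

Lemma arch_component_okT a : R a -> arch_component_ok mul T (fun b => R b /\ NR mul R a b).
Proof.
move=> /R_spowP [y yT [n n0 ->]].
have memC b : R b /\ NR mul R (pw y n) b <->
    exists u k, [/\ u \in T, 0 < k, b = pw u k & u = y \/ partners y u].
  split=> [[/R_spowP [u uT [k k0 ->]] N] | [u [k [uT k0 -> Hu]]]].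
    by exists u, k; split => //; apply/(NR_spowP y n u k yT uT n0 k0); split => //; apply: R_spow.
  exact/(NR_spowP y n u k yT uT n0 k0).
case: (classic (exists2 w, w \in T & partners y w)) => [[w wT Pyw] | no_partner].
  right.
  have C_def b : R b /\ NR mul R (pw y n) b <-> gen1 mul y b \/ gen1 mul w b.
    rewrite memC; split=> [[u [k [uT k0 -> [-> | Pyu]]]] | [[k [k0 ->]] | [k [k0 ->]]]].
    - by left; exists k.
    - by right; exists k; rewrite (partners_uniq y u w).
    - by exists y, k; split => //; left.
    - by exists w, k; split => //; right.
  have [yw_comm [yw_y | yw_w]] := T_absorbing y w yT wT Pyw.1.
    exists w, y; split => //; split => //.
    by apply: ideal_ext_partners => // b; rewrite C_def or_comm.
  exists y, w; split => //; split => //.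
  by apply: ideal_ext_partners => //; [exact: partners_sym | rewrite -yw_comm].
left; exists y; split => //; split; last exact: (count_T_spec y yT).1.
move=> b; rewrite memC; split=> [[u [k [uT k0 -> [-> | Pyu]]]] | [k [k0 ->]]].
- by exists k.
- by case: no_partner; exists u.
- by exists y, k; split => //; left.
Qed.

End Forward.

(** * The converse *)

Section Backward.
Hypothesis R_commutes : forall x y, R x -> R y -> mul x y = mul y x.
Hypothesis idem_outside_R : forall x, ~ R x -> idem x.
Hypothesis R_Y_chain : Y_chain mul R.
Hypothesis ltN_absorbs : forall x1 x2, R x1 -> R x2 -> ltN mul R x1 x2 -> mul x1 x2 = x1.
Hypothesis components_ok : forall a, R a -> arch_component_ok mul T (fun b => R b /\ NR mul R a b).
Hypothesis count_T : forall x, x \in T -> count_mem x T = ind x + per x - 2.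

Lemma count_T_nonidem x : x \in T -> ~ idem x.
Proof.
move=> xT /(idem_index_period (spow_periodic x)) [i1 p1].
have : 0 < count_mem x T by rewrite -has_count has_pred1.
by rewrite count_T // i1 p1.
Qed.

Lemma NR_refl b : R b -> NR mul R b b.
Proof. by move=> Rb; split; exists 2, b. Qed.

Lemma R_cyclic_cover b : R b -> exists2 z, z \in T & gen1 mul z b.
Proof.
move=> Rb; case: (components_ok b Rb) => [[x [xT [C_def _]]] | [x1 [x2 [x1T [x2T ext]]]]].
  by exists x => //; apply/C_def; split => //; apply: NR_refl.
have [C_cyc _ _ _] := ideal_ext_case_spec _ _ _ ext.
by case: (C_cyc b (conj Rb (NR_refl b Rb))) => G; [exists x2 | exists x1].
Qed.

(* The non-idempotent powers of the letters cover NE, and there are at most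
   sum_x (ind x + per x - 2) = |T| = |NE| of them, so no two letters share one. *)
Lemma common_spow_idem_by_count z z' k k' : z \in T -> z' \in T -> z <> z' -> 0 < k -> 0 < k' ->
  pw z k = pw z' k' -> idem (pw z k).
Proof.
move=> zT z'T zz' k0 k'0 E; apply: NNPP => ni.
pose P := flatten [seq nonidem_powers u | u <- undup T].
have NE_P : {subset NE <= P}.
  move=> a /NE_def na; have Ra : R a by apply: NNPP => /idem_outside_R.
  have [u uT [m [m0 Ea]]] := R_cyclic_cover a Ra.
  apply/flatten_mapP; exists u; first by rewrite mem_undup.
  by rewrite Ea; apply: (mem_nonidem_powers (spow_periodic u)) => //; rewrite -Ea.
have size_P : size P <= size NE.
  rewrite -size_T -(perm_size (perm_count_undup T)) !size_flatten /shape -!map_comp.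
  rewrite !sumnE !big_map big_seq [X in _ <= X]big_seq; apply: leq_sum => u.
  rewrite mem_undup => uT /=; rewrite size_nseq count_T //.
  exact: size_nonidem_powers (spow_periodic u).
have uniq_P : uniq P := leq_size_uniq NE_uniq NE_P size_P.
apply: zz'; apply: (flatten_map_disjoint _ _ _ _ _ _ (pw z k) uniq_P); rewrite ?mem_undup //.
  exact: (mem_nonidem_powers (spow_periodic z)).
by rewrite E; apply: (mem_nonidem_powers (spow_periodic z')); rewrite // -E.
Qed.

Lemma T_gen1_eq u w : u \in T -> w \in T -> gen1 mul u w -> w = u.
Proof.
move=> uT wT [k [k0 E]]; apply: NNPP => wu.
apply: (count_T_nonidem w wT); rewrite E.
exact: (common_spow_idem_by_count u w k 1 uT wT (nesym wu) k0 isT (esym E)).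
Qed.

Lemma T_absorbing_of_components z z' : z \in T -> z' \in T -> z <> z' ->
  mul z z' = mul z' z /\ (mul z z' = z \/ mul z z' = z').
Proof.
move=> zT z'T zz'.
have Rz := R_spow z 1 zT isT; have Rz' := R_spow z' 1 z'T isT.
have comm := R_commutes z z' Rz Rz'; split => //.
have same_class : NR mul R z z' -> mul z z' = z \/ mul z z' = z'.
  move=> N; case: (components_ok z Rz) => [[x [xT [C_def _]]] | [x1 [x2 [x1T [x2T ext]]]]].
    have gz := (C_def z).1 (conj Rz (NR_refl z Rz)); have gz' := (C_def z').1 (conj Rz' N).
    by case: zz'; rewrite (T_gen1_eq x z) // (T_gen1_eq x z').
  have [C_cyc x12 _ _] := ideal_ext_case_spec _ _ _ ext.
  have which b : b \in T -> R b /\ NR mul R z b -> b = x1 \/ b = x2.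
    by move=> bT /C_cyc [] G; [right | left]; apply: T_gen1_eq.
  case: (which z zT (conj Rz (NR_refl z Rz))) => ez; case: (which z' z'T (conj Rz' N)) => ez';
    rewrite ez ez'; rewrite ez ez' in zz'; try by case: zz'.
  - by right.
  - by left; rewrite (R_commutes x2 x1) ?x12 //; apply: (R_spow _ 1).
case: (R_Y_chain z z' Rz Rz') => [le_zz' | le_z'z].
  case: (classic (leN mul R z' z)) => [le_z'z | nle]; first by apply: same_class.
  by left; apply: ltN_absorbs.
case: (classic (leN mul R z z')) => [le_zz' | nle]; first by apply: same_class.
by right; rewrite comm; apply: ltN_absorbs.
Qed.

Lemma T_index_cong z : z \in T -> ind z = 1 %[mod per z].
Proof.
move=> zT; have Rz := R_spow z 1 zT isT.
case: (components_ok z Rz) => [[x [xT [C_def cong_x]]] | [x1 [x2 [x1T [x2T ext]]]]].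
  by have gz := (C_def z).1 (conj Rz (NR_refl z Rz)); rewrite (T_gen1_eq x z xT zT gz).
have [C_cyc _ i2 p1] := ideal_ext_case_spec _ _ _ ext.
case: (C_cyc z (conj Rz (NR_refl z Rz))) => G.
  by rewrite (T_gen1_eq x2 z) // i2.
by rewrite (T_gen1_eq x1 z) // p1 !modn1.
Qed.

Lemma prod_free_of_structure a : prod_of T a -> ~ idem a.
Proof.
move=> [x [l [sub_T ->]]].
have inT z : z \in x :: l -> z \in T by apply: mem_submseq.
have [y yl [-> _]] := wprod_absorbing _ T_absorbing_of_components x l (inT x (mem_head _ _))
  (fun z zl => inT z (mem_behead (s := x :: l) zl)).
have yT := inT y yl; apply: (nonidem_prefix (spow_periodic y)); first exact: T_index_cong.
by rewrite -count_T // sub_T andbT -has_count has_pred1.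
Qed.

End Backward.

End ProductFreeSequences.
End Semigroup.

Theorem theorem3p2 (S : eqType) (mul : S -> S -> S)
  (mulA : forall x y z, mul x (mul y z) = mul (mul x y) z)
  (HS : inhabited S)
  (NE : seq S) (NE_uniq : uniq NE) (NE_def : forall x, x \in NE <-> mul x x <> x)
  (T : seq S) (HT : size T = size NE) :
  (forall a, in_Prod mul T a -> mul a a <> a) <->
  (let R := gen mul (fun y => y \in T) in
   finite_set R /\
   (forall x y, R x -> R y -> mul x y = mul y x) /\
   (forall x, ~ R x -> mul x x = x) /\
   Y_chain mul R /\
   (forall x1 x2, R x1 -> R x2 -> ltN mul R x1 x2 -> mul x1 x2 = x1) /\
   (forall a, R a -> arch_component_ok mul T (fun b => R b /\ NR mul R a b)) /\
   (forall x, x \in T -> count_mem x T = sindex mul x + speriod mul x - 2)).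
Proof.
cbv zeta; split=> [free | [_ [comm [outside [chain [ltN [components count_T]]]]]] a /in_ProdE].
  have T_free := fun a Pa => free a ((in_ProdE T a).2 Pa).
  split; first exact: (R_finite mulA NE T NE_uniq NE_def HT T_free).
  split; first exact: (R_comm mulA NE T NE_uniq NE_def HT T_free).
  split; first exact: (notR_idem mulA NE T NE_uniq NE_def HT T_free).
  split; first exact: (R_chain mulA NE T NE_uniq NE_def HT T_free).
  split; first exact: (ltN_absorb mulA NE T NE_uniq NE_def HT T_free).
  split; first exact: (arch_component_okT mulA NE T NE_uniq NE_def HT T_free).
  by move=> x xT; case: (count_T_spec mulA NE T NE_uniq NE_def HT T_free x xT).
exact: (prod_free_of_structure mulA NE T NE_uniq NE_def HT
  comm outside chain ltN components count_T).
Qed.
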